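(* Assume $C_L<C_R$ and consider a wave sequence $U_L\xrightarrow{S_1}U_1\xrightarrow{C}U_2\xrightarrow{S_2}U_R$ with $U_L\ne U_R$, consisting of an admissible $S$-wave, an admissible $C$-wave and an admissible $S$-wave. This sequence is compatible if and only if $U_L\in\mathcal{R}$, $U_1\in\mathcal{T}$, $U_2\in\mathcal{L}$ and $0\le S_R\le S^k(U_2)$.
   Context: System: $\partial_t S+\partial_x f(S,C)=0$, $\partial_t[(S+\mathcal{A})C]+\partial_x[f(S,C)C]=0$, with $\mathcal{A}>0$ constant and states $U=(S,C)\in[0,1]^2$. The flux $f$ satisfies: (a) $f\in\mathscr{C}^2$, $f(0,C)=0$, $f(1,C)=1$, $\partial_Sf(0,C)=\partial_Sf(1,C)=0$; (b) for each $C$, $f(\cdot,C)$ is strictly increasing and S-shaped with a single inflection point (convex then concave); (c) $\partial_Cf>0$ for $0<S<1$. Eigenvalues: $\lambda_C(S,C)=f(S,C)/(S+\mathcal{A})$, $\lambda_S(S,C)=\partial_Sf(S,C)$. Transition curve $\mathcal{T}=\{\lambda_S=\lambda_C\}$, $\mathcal{L}=\{\lambda_S>\lambda_C\}$, $\mathcal{R}=\{\lambda_S<\lambda_C\}$; for each $C$, $\mathcal{T}$ contains exactly one point $(S^*(C),C)$ with $S^*(C)\in(0,1)$. For a state $U=(S,C)$, $S^k(U)$ denotes the value $S'\in[0,1]$, $S'\ne S$, with $\lambda_C(S',C)=\lambda_C(U)$; $S^k(U)=+\infty$ if no such $S'$ exists, and $S^k(U)=S^*(C)$ if $S=S^*(C)$.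 An $S$-wave from $U_a$ to $U_b$ requires $C_a=C_b=C$ and is the solution of the scalar Riemann problem $\partial_tS+\partial_xf(S,C)=0$ with left state $S_a$, right state $S_b$, built from shocks satisfying Oleinik's entropy condition and rarefactions; its initial velocity $v_i$ and final velocity $v_f$ are the smallest and largest propagation speeds in that fan. A $C$-wave from $U_a$ to $U_b$ is a contact discontinuity with $\lambda_C(U_a)=\lambda_C(U_b)$, speed $v_i=v_f=\lambda_C(U_a)$; it is admissible iff $U_a,U_b$ both lie in $\mathcal{L}\cup\mathcal{T}$ or both in $\mathcal{R}\cup\mathcal{T}$. A wave sequence is compatible iff for each pair of consecutive waves $a$ then $b$, $v_f^a\le v_i^b$. *)

From Stdlib Require Import Reals Classical ClassicalEpsilon List.
From Coquelicot Require Import Coquelicot.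
Open Scope R_scope.

(* A state U = (S, C). *)
Definition state := (R * R)%type.
Definition inBox (U : state) : Prop := 0 <= fst U <= 1 /\ 0 <= snd U <= 1.

Definition dS (g : R -> R -> R) (S C : R) : R := Derive (fun s => g s C) S.
Definition dC (g : R -> R -> R) (S C : R) : R := Derive (fun c => g S c) C.

Definition C2_flux (f : R -> R -> R) : Prop :=
  forall S C,
    ex_derive (fun s => f s C) S /\ ex_derive (fun c => f S c) C /\
    ex_derive (fun s => dS f s C) S /\ ex_derive (fun c => dS f S c) C /\
    ex_derive (fun s => dC f s C) S /\ ex_derive (fun c => dC f S c) C /\
    continuity_2d_pt f S C /\
    continuity_2d_pt (dS f) S C /\ continuity_2d_pt (dC f) S C /\
    continuity_2d_pt (dS (dS f)) S C /\ continuity_2d_pt (dC (dS f)) S C /\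
    continuity_2d_pt (dS (dC f)) S C /\ continuity_2d_pt (dC (dC f)) S C.

Definition strictly_convex_on (g : R -> R) (a b : R) : Prop :=
  forall x y t, a <= x <= b -> a <= y <= b -> x <> y -> 0 < t < 1 ->
    g (t * x + (1 - t) * y) < t * g x + (1 - t) * g y.

Definition strictly_concave_on (g : R -> R) (a b : R) : Prop :=
  strictly_convex_on (fun x => - g x) a b.

Definition flux_hyp (f : R -> R -> R) : Prop :=
  C2_flux f /\
  (forall C, 0 <= C <= 1 ->
     f 0 C = 0 /\ f 1 C = 1 /\ dS f 0 C = 0 /\ dS f 1 C = 0) /\
  (forall C, 0 <= C <= 1 ->
     (forall x y, 0 <= x -> x < y -> y <= 1 -> f x C < f y C) /\
     exists a, 0 < a < 1 /\
       strictly_convex_on (fun s => f s C) 0 a /\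
       strictly_concave_on (fun s => f s C) a 1) /\
  (forall S C, 0 < S < 1 -> 0 <= C <= 1 -> dC f S C > 0).

Definition lamC (f : R -> R -> R) (A : R) (U : state) : R :=
  f (fst U) (snd U) / (fst U + A).
Definition lamS (f : R -> R -> R) (U : state) : R := dS f (fst U) (snd U).

Definition inL f A (U : state) : Prop := inBox U /\ lamS f U > lamC f A U.
Definition inT f A (U : state) : Prop := inBox U /\ lamS f U = lamC f A U.
Definition inR f A (U : state) : Prop := inBox U /\ lamS f U < lamC f A U.

Definition transition_fun f A (Sstar : R -> R) : Prop :=
  forall C, 0 <= C <= 1 ->
    0 < Sstar C < 1 /\ inT f A (Sstar C, C) /\
    (forall S, 0 < S < 1 -> inT f A (S, C) -> S = Sstar C).

Definition Sk f A (Sstar : R -> R) (U : state) : Rbar :=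
  match excluded_middle_informative (fst U = Sstar (snd U)) with
  | left _ => Finite (Sstar (snd U))
  | right _ =>
    match excluded_middle_informative
            (exists S', 0 <= S' <= 1 /\ S' <> fst U /\
                        lamC f A (S', snd U) = lamC f A U) with
    | left h => Finite (proj1_sig (constructive_indefinite_description _ h))
    | right _ => p_infty
    end
  end.

(* Velocities of the S-wave solving the scalar Riemann problem
   dt S + dx f(S,C) = 0, S(0-)=Sa, S(0+)=Sb (Sa <> Sb), built from Oleinik
   shocks and rarefactions.  Its fan is the derivative of the lower convex
   envelope of f(.,C) on [Sa,Sb] (if Sa<Sb), resp. of the upper concave
   envelope on [Sb,Sa] (if Sb<Sa); the smallest speed (at the Sa end) and the
   largest speed (at the Sb end) are the one-sided derivatives of the envelope
   at the endpoints, i.e. the following extremal secant slopes. *)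
Definition between (a b s : R) : Prop := Rmin a b <= s <= Rmax a b.

Definition vi_S (f : R -> R -> R) (Sa Sb C : R) : Rbar :=
  Glb_Rbar (fun v => exists s, between Sa Sb s /\ s <> Sa /\
                               v = (f s C - f Sa C) / (s - Sa)).
Definition vf_S (f : R -> R -> R) (Sa Sb C : R) : Rbar :=
  Lub_Rbar (fun v => exists s, between Sa Sb s /\ s <> Sb /\
                               v = (f Sb C - f s C) / (Sb - s)).

Inductive wave : Type :=
  | SWave (Ua Ub : state)
  | CWave (Ua Ub : state).

(* An S-wave from Ua to Ub: same C, nontrivial (Sa <> Sb).  S-waves built
   from Oleinik shocks and rarefactions are always admissible. *)
Definition admissible f A (w : wave) : Prop :=
  match w with
  | SWave Ua Ub => snd Ua = snd Ub /\ fst Ua <> fst Ub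
  | CWave Ua Ub =>
      lamC f A Ua = lamC f A Ub /\
      ((  (inL f A Ua \/ inT f A Ua) /\ (inL f A Ub \/ inT f A Ub))
       \/ ((inR f A Ua \/ inT f A Ua) /\ (inR f A Ub \/ inT f A Ub)))
  end.

Definition v_init f A (w : wave) : Rbar :=
  match w with
  | SWave Ua Ub => vi_S f (fst Ua) (fst Ub) (snd Ua)
  | CWave Ua Ub => Finite (lamC f A Ua)
  end.
Definition v_final f A (w : wave) : Rbar :=
  match w with
  | SWave Ua Ub => vf_S f (fst Ua) (fst Ub) (snd Ua)
  | CWave Ua Ub => Finite (lamC f A Ua)
  end.

Fixpoint compatible f A (ws : list wave) : Prop :=
  match ws with
  | nil => True
  | w1 :: rest =>
      match rest with
      | nil => True
      | w2 :: _ => Rbar_le (v_final f A w1) (v_init f A w2) /\ compatible f A rest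
      end
  end.

(* Along a line of constant C, lamC(S) = f(S,C)/(S+A) is the slope of the ray
   from (-A,0) to the graph of f(.,C), and d lamC/dS = (lamS - lamC)/(S+A).  As
   lamS - lamC vanishes in (0,1) only at S*(C) and is negative at S = 1, lamC
   increases on [0,S*] and decreases on [S*,1]; thus L, T and R are S < S*,
   S in {0,S*} and S > S*.  Comparing a secant slope of f with a ray slope at an
   endpoint amounts to comparing values of lamC, so both compatibility
   conditions are monotonicity statements about lamC.  The first forces
   S_1 >= S*(C_L), the second S_2 <= S*(C_R); since the peak value
   lamC(S*(C),C) increases with C, the contact condition lamC(U_1) = lamC(U_2)
   pins U_1 to T and puts U_2 in L, and what remains says that S_R does not go
   past S^k(U_2), where lamC returns to the level lamC(U_2). *)

From Stdlib Require Import Reals List Lra Psatz ClassicalEpsilon.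
From Coquelicot Require Import Coquelicot.
Open Scope R_scope.

Lemma between_iff a b s : between a b s <-> a <= s <= b \/ b <= s <= a.
Proof. unfold between, Rmin, Rmax; destruct (Rle_dec a b); lra. Qed.

Lemma strict_incr_of_derive_pos (g dg : R -> R) p q :
  (forall c, p <= c <= q -> is_derive g c (dg c)) ->
  (forall c, p < c < q -> 0 < dg c) ->
  forall x y, p <= x -> x < y -> y <= q -> g x < g y.
Proof.
  intros hd hpos x y hx hxy hy.
  destruct (MVT_cor2 g dg x y hxy) as [c [e hc]].
  { intros c hc. apply is_derive_Reals, hd. lra. }
  assert (0 < dg c * (y - x)) by (apply Rmult_lt_0_compat; [apply hpos|]; lra).
  lra.
Qed.

Lemma strict_decr_of_derive_neg (g dg : R -> R) p q :
  (forall c, p <= c <= q -> is_derive g c (dg c)) ->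
  (forall c, p < c < q -> dg c < 0) ->
  forall x y, p <= x -> x < y -> y <= q -> g y < g x.
Proof.
  intros hd hneg x y hx hxy hy.
  enough (- g x < - g y) by lra.
  apply (strict_incr_of_derive_pos (fun t => - g t) (fun t => - dg t) p q); auto.
  - intros c hc. exact (is_derive_opp g c (dg c) (hd c hc)).
  - intros c hc. specialize (hneg c hc). lra.
Qed.

Lemma nonvanishing_same_sign (g : R -> R) p q : p <= q ->
  (forall s, p <= s <= q -> continuity_pt g s) ->
  (forall s, p <= s <= q -> g s <> 0) -> 0 < g p * g q.
Proof.
  intros hpq hc hnz.
  assert (hp : g p <> 0) by (apply hnz; lra).
  assert (hq : g q <> 0) by (apply hnz; lra).
  destruct (Req_dec p q) as [<-|ne]; [nra|].
  destruct (Rlt_or_le 0 (g p * g q)) as [h|h]; [exact h|exfalso].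
  destruct (Rlt_or_le (g p) 0) as [hp'|hp'].
  - destruct (Ranalysis5.IVT_interv g p q hc ltac:(lra) hp' ltac:(nra))
      as [z [hz ez]].
    exact (hnz z hz ez).
  - destruct (Ranalysis5.IVT_interv (fun t => - g t) p q) as [z [hz ez]].
    + intros z hz. apply continuity_pt_opp, hc, hz.
    + lra.
    + lra.
    + nra.
    + apply (hnz z hz). lra.
Qed.

(* [g x / (x + A)] is the slope of the ray from [(-A, 0)] to [(x, g x)]. *)
Lemma secant_sub_ray_slope (g : R -> R) A x s :
  s <> x -> 0 < x + A -> 0 < s + A ->
  exists k, 0 < k /\
    (g s - g x) / (s - x) - g x / (x + A)
    = k * ((s - x) * (g s / (s + A) - g x / (x + A))).
Proof.
  intros hsx hx hs. exists ((s + A) / (s - x) ^ 2). split.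
  - apply Rdiv_lt_0_compat; [lra|]. destruct (Rlt_or_le s x); nra.
  - field. lra.
Qed.

Lemma Lub_Rbar_le_iff (E : R -> Prop) (x : R) :
  Rbar_le (Lub_Rbar E) x <-> forall v, E v -> v <= x.
Proof.
  destruct (Lub_Rbar_correct E) as [hub hlub]. split.
  - intros h v hv. exact (Rbar_le_trans (Finite v) _ (Finite x) (hub v hv) h).
  - intros h. apply hlub. exact h.
Qed.

Lemma Glb_Rbar_ge_iff (E : R -> Prop) (x : R) :
  Rbar_le x (Glb_Rbar E) <-> forall v, E v -> x <= v.
Proof.
  destruct (Glb_Rbar_correct E) as [hlb hglb]. split.
  - intros h v hv. exact (Rbar_le_trans (Finite x) _ (Finite v) h (hlb v hv)).
  - intros h. apply hglb. exact h.
Qed.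

Definition lamC_at (f : R -> R -> R) (A C s : R) : R := lamC f A (s, C).
Definition lam_gap (f : R -> R -> R) (A C s : R) : R := lamS f (s, C) - lamC f A (s, C).

Definition lamC_falls_through (f : R -> R -> R) (A C a b x : R) : Prop :=
  forall s, between a b s -> (s - x) * (lamC_at f A C s - lamC_at f A C x) <= 0.

Definition lamC_rises_through (f : R -> R -> R) (A C a b x : R) : Prop :=
  forall s, between a b s -> 0 <= (s - x) * (lamC_at f A C s - lamC_at f A C x).

Lemma vf_S_le_lamC_iff f A C xa xb : 0 < A -> 0 <= xa -> 0 <= xb ->
  Rbar_le (vf_S f xa xb C) (lamC_at f A C xb) <-> lamC_falls_through f A C xa xb xb.
Proof.
  intros hA ha hb. unfold vf_S. rewrite Lub_Rbar_le_iff. split.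
  - intros h s hs.
    destruct (Req_dec s xb) as [->|ne]; [lra|].
    assert (0 <= s) by (apply between_iff in hs; lra).
    specialize (h _ (ex_intro _ s (conj hs (conj ne eq_refl)))).
    destruct (secant_sub_ray_slope (fun t => f t C) A xb s ne ltac:(lra) ltac:(lra))
      as [k [hk e]].
    replace ((f xb C - f s C) / (xb - s)) with ((f s C - f xb C) / (s - xb)) in h
      by (field; lra).
    unfold lamC_at, lamC in *; simpl in *. nra.
  - intros h v [s [hs [ne ->]]].
    assert (0 <= s) by (apply between_iff in hs; lra).
    destruct (secant_sub_ray_slope (fun t => f t C) A xb s ne ltac:(lra) ltac:(lra))
      as [k [hk e]].
    specialize (h s hs).
    replace ((f xb C - f s C) / (xb - s)) with ((f s C - f xb C) / (s - xb))
      by (field; lra).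
    unfold lamC_at, lamC in *; simpl in *. nra.
Qed.

Lemma lamC_le_vi_S_iff f A C xa xb : 0 < A -> 0 <= xa -> 0 <= xb ->
  Rbar_le (lamC_at f A C xa) (vi_S f xa xb C) <-> lamC_rises_through f A C xa xb xa.
Proof.
  intros hA ha hb. unfold vi_S. rewrite Glb_Rbar_ge_iff. split.
  - intros h s hs.
    destruct (Req_dec s xa) as [->|ne]; [lra|].
    assert (0 <= s) by (apply between_iff in hs; lra).
    specialize (h _ (ex_intro _ s (conj hs (conj ne eq_refl)))).
    destruct (secant_sub_ray_slope (fun t => f t C) A xa s ne ltac:(lra) ltac:(lra))
      as [k [hk e]].
    unfold lamC_at, lamC in *; simpl in *. nra.
  - intros h v [s [hs [ne ->]]].
    assert (0 <= s) by (apply between_iff in hs; lra).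
    destruct (secant_sub_ray_slope (fun t => f t C) A xa s ne ltac:(lra) ltac:(lra))
      as [k [hk e]].
    specialize (h s hs).
    unfold lamC_at, lamC in *; simpl in *. nra.
Qed.

Section Flux.

Variables (f : R -> R -> R) (A : R) (Sstar : R -> R).
Hypotheses (hA : 0 < A) (hf : flux_hyp f) (hT : transition_fun f A Sstar).

Lemma is_derive_flux_S C s : is_derive (fun t => f t C) s (dS f s C).
Proof. destruct (proj1 hf s C) as [h _]. exact (Derive_correct _ _ h). Qed.

Lemma is_derive_flux_C C s : is_derive (fun c => f s c) C (dC f s C).
Proof. destruct (proj1 hf s C) as [_ [h _]]. exact (Derive_correct _ _ h). Qed.

Lemma is_derive_lamC_at C s : s + A <> 0 ->
  is_derive (lamC_at f A C) s (lam_gap f A C s / (s + A)).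
Proof.
  intros hs.
  assert (hden : is_derive (fun t => t + A) s 1) by (auto_derive; [exact I | ring]).
  assert (H := is_derive_div _ _ s _ _ (is_derive_flux_S C s) hden hs).
  unfold lam_gap, lamS, lamC; simpl.
  replace ((dS f s C - f s C / (s + A)) / (s + A))
    with ((dS f s C * (s + A) - f s C * 1) / (s + A) ^ 2) by (field; exact hs).
  exact H.
Qed.

Lemma continuity_lamC_at C s : s + A <> 0 -> continuity_pt (lamC_at f A C) s.
Proof.
  intros hs. apply derivable_continuous_pt, ex_derive_Reals_0.
  eexists. exact (is_derive_lamC_at C s hs).
Qed.

Lemma continuity_lam_gap C s : s + A <> 0 -> continuity_pt (lam_gap f A C) s.
Proof.
  intros hs. apply derivable_continuous_pt, ex_derive_Reals_0.
  apply (ex_derive_minus (fun t => dS f t C) (lamC_at f A C)).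
  - destruct (proj1 hf s C) as [_ [_ [h _]]]. exact h.
  - eexists. exact (is_derive_lamC_at C s hs).
Qed.

Lemma lamC_at_0 C : 0 <= C <= 1 -> lamC_at f A C 0 = 0.
Proof.
  intros hC. destruct (proj1 (proj2 hf) C hC) as [h0 _].
  unfold lamC_at, lamC; simpl. rewrite h0. unfold Rdiv. ring.
Qed.

Lemma lamC_at_pos C s : 0 <= C <= 1 -> 0 < s <= 1 -> 0 < lamC_at f A C s.
Proof.
  intros hC hs. destruct (proj1 (proj2 hf) C hC) as [h0 _].
  destruct (proj1 (proj2 (proj2 hf)) C hC) as [hinc _].
  unfold lamC_at, lamC; simpl. apply Rdiv_lt_0_compat; [|lra].
  rewrite <- h0. apply hinc; lra.
Qed.

Lemma lam_gap_0 C : 0 <= C <= 1 -> lam_gap f A C 0 = 0.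
Proof.
  intros hC. destruct (proj1 (proj2 hf) C hC) as [h0 [_ [hd0 _]]].
  unfold lam_gap, lamS, lamC; simpl. rewrite h0, hd0. unfold Rdiv. ring.
Qed.

Lemma lam_gap_1 C : 0 <= C <= 1 -> lam_gap f A C 1 < 0.
Proof.
  intros hC. destruct (proj1 (proj2 hf) C hC) as [_ [h1 [_ hd1]]].
  unfold lam_gap, lamS, lamC; simpl. rewrite h1, hd1.
  assert (0 < 1 / (1 + A)) by (apply Rdiv_lt_0_compat; lra). lra.
Qed.

Lemma lam_gap_Sstar C : 0 <= C <= 1 -> lam_gap f A C (Sstar C) = 0.
Proof. intros hC. destruct (hT C hC) as [_ [[_ e] _]]. unfold lam_gap. lra. Qed.

Lemma lam_gap_neq_0 C s : 0 <= C <= 1 -> 0 < s < 1 -> s <> Sstar C ->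
  lam_gap f A C s <> 0.
Proof.
  intros hC hs hne e. apply hne. destruct (hT C hC) as [_ [_ huniq]].
  apply huniq; [exact hs|]. split; [split; simpl; lra|].
  unfold lam_gap in e. lra.
Qed.

(* [lamC_at] rises from [0] on [[0, Sstar C]], so by the mean value theorem the
   gap is positive somewhere in between; having no zero there, it is positive
   throughout. *)
Lemma lam_gap_pos C s : 0 <= C <= 1 -> 0 < s < Sstar C -> 0 < lam_gap f A C s.
Proof.
  intros hC hs. destruct (hT C hC) as [ha _].
  destruct (MVT_cor2 (lamC_at f A C) (fun t => lam_gap f A C t / (t + A)) 0 (Sstar C))
    as [c [e hc]]; [lra| |].
  { intros c hc. apply is_derive_Reals, is_derive_lamC_at. lra. }
  assert (hgc : 0 < lam_gap f A C c).
  { rewrite lamC_at_0 in e by exact hC.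
    assert (hpos := lamC_at_pos C (Sstar C) hC ltac:(lra)).
    assert (0 < lam_gap f A C c / (c + A)) by (apply (Rmult_lt_reg_r (Sstar C)); lra).
    apply (Rmult_lt_reg_r (/ (c + A))); [apply Rinv_0_lt_compat; lra|]. lra. }
  assert (hsign : forall p q, 0 < p -> p <= q -> q < Sstar C ->
                    0 < lam_gap f A C p * lam_gap f A C q).
  { intros p q hp hpq hq. apply nonvanishing_same_sign; [exact hpq| |].
    - intros t ht. apply continuity_lam_gap. lra.
    - intros t ht. apply lam_gap_neq_0; lra. }
  destruct (Rle_or_lt c s) as [l|l].
  - specialize (hsign c s ltac:(lra) l ltac:(lra)). nra.
  - specialize (hsign s c ltac:(lra) ltac:(lra) ltac:(lra)). nra.
Qed.

Lemma lam_gap_neg C s : 0 <= C <= 1 -> Sstar C < s <= 1 -> lam_gap f A C s < 0.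
Proof.
  intros hC hs. destruct (hT C hC) as [ha _].
  assert (h1 := lam_gap_1 C hC).
  assert (0 < lam_gap f A C s * lam_gap f A C 1); [|nra].
  apply nonvanishing_same_sign; [lra| |].
  - intros t ht. apply continuity_lam_gap. lra.
  - intros t ht. destruct (Req_dec t 1) as [->|n1]; [lra|].
    apply lam_gap_neq_0; lra.
Qed.

Lemma lamC_at_increasing C x y : 0 <= C <= 1 ->
  0 <= x -> x < y -> y <= Sstar C -> lamC_at f A C x < lamC_at f A C y.
Proof.
  intros hC. apply (strict_incr_of_derive_pos _ (fun t => lam_gap f A C t / (t + A))).
  - intros c hc. apply is_derive_lamC_at. lra.
  - intros c hc. apply Rdiv_lt_0_compat; [apply lam_gap_pos|]; lra.
Qed.

Lemma lamC_at_decreasing C x y : 0 <= C <= 1 ->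
  Sstar C <= x -> x < y -> y <= 1 -> lamC_at f A C y < lamC_at f A C x.
Proof.
  intros hC. destruct (hT C hC) as [ha _].
  apply (strict_decr_of_derive_neg _ (fun t => lam_gap f A C t / (t + A))).
  - intros c hc. apply is_derive_lamC_at. lra.
  - intros c hc. assert (lam_gap f A C c < 0) by (apply lam_gap_neg; lra).
    assert (0 < - lam_gap f A C c / (c + A)) by (apply Rdiv_lt_0_compat; lra).
    unfold Rdiv in *. lra.
Qed.

Lemma lamC_at_nondecreasing C x y : 0 <= C <= 1 ->
  0 <= x -> x <= y -> y <= Sstar C -> lamC_at f A C x <= lamC_at f A C y.
Proof.
  intros hC hx hxy hy. destruct (Req_dec x y) as [->|ne]; [lra|].
  left. apply lamC_at_increasing; lra.
Qed.

Lemma lamC_at_nonincreasing C x y : 0 <= C <= 1 ->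
  Sstar C <= x -> x <= y -> y <= 1 -> lamC_at f A C y <= lamC_at f A C x.
Proof.
  intros hC hx hxy hy. destruct (Req_dec x y) as [->|ne]; [lra|].
  left. apply lamC_at_decreasing; lra.
Qed.

Lemma lamC_at_le_Sstar C s : 0 <= C <= 1 -> 0 <= s <= 1 ->
  lamC_at f A C s <= lamC_at f A C (Sstar C).
Proof.
  intros hC hs. destruct (hT C hC) as [ha _].
  destruct (Rle_or_lt s (Sstar C)) as [l|l].
  - apply lamC_at_nondecreasing; lra.
  - apply lamC_at_nonincreasing; lra.
Qed.

Lemma lamC_at_increasing_in_C C1 C2 s :
  0 <= C1 -> C1 < C2 -> C2 <= 1 -> 0 < s < 1 -> lamC_at f A C1 s < lamC_at f A C2 s.
Proof.
  intros h1 h12 h2 hs.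
  assert (hf12 : f s C1 < f s C2).
  { apply (strict_incr_of_derive_pos (fun c => f s c) (fun c => dC f s c) C1 C2);
      try lra.
    - intros c hc. apply is_derive_flux_C.
    - intros c hc. apply (proj2 (proj2 (proj2 hf))); lra. }
  unfold lamC_at, lamC; simpl. unfold Rdiv.
  apply Rmult_lt_compat_r; [apply Rinv_0_lt_compat; lra | exact hf12].
Qed.

Lemma lamC_at_Sstar_increasing C1 C2 : 0 <= C1 -> C1 < C2 -> C2 <= 1 ->
  lamC_at f A C1 (Sstar C1) < lamC_at f A C2 (Sstar C2).
Proof.
  intros h1 h12 h2. destruct (hT C1 ltac:(lra)) as [ha _].
  apply (Rlt_le_trans _ (lamC_at f A C2 (Sstar C1))).
  - apply lamC_at_increasing_in_C; lra.
  - apply lamC_at_le_Sstar; lra.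
Qed.

Lemma lam_gap_cases C s : 0 <= C <= 1 -> 0 <= s <= 1 ->
  ((s = 0 \/ s = Sstar C) /\ lam_gap f A C s = 0) \/
  (0 < s < Sstar C /\ 0 < lam_gap f A C s) \/
  (Sstar C < s /\ lam_gap f A C s < 0).
Proof.
  intros hC hs. destruct (hT C hC) as [ha _].
  destruct (Req_dec s 0) as [->|n0]; [left; split; [lra | apply lam_gap_0, hC]|].
  destruct (Rtotal_order s (Sstar C)) as [l|[->|g]].
  - right; left. split; [lra | apply lam_gap_pos; lra].
  - left. split; [lra | apply lam_gap_Sstar, hC].
  - right; right. split; [lra | apply lam_gap_neg; lra].
Qed.

Lemma inL_iff C s : inBox (s, C) -> inL f A (s, C) <-> 0 < s < Sstar C.
Proof.
  intros hb. pose proof hb as [hs hC]; simpl in hs, hC.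
  destruct (hT C hC) as [ha _].
  destruct (lam_gap_cases C s hC hs) as [[? hg]|[[? hg]|[? hg]]];
    unfold inL, lam_gap in *;
    (split; [intros [_ ?]; lra | intros ?; split; [exact hb | lra]]).
Qed.

Lemma inT_iff C s : inBox (s, C) -> inT f A (s, C) <-> s = 0 \/ s = Sstar C.
Proof.
  intros hb. pose proof hb as [hs hC]; simpl in hs, hC.
  destruct (hT C hC) as [ha _].
  destruct (lam_gap_cases C s hC hs) as [[? hg]|[[? hg]|[? hg]]];
    unfold inT, lam_gap in *;
    (split; [intros [_ ?]; lra | intros ?; split; [exact hb | lra]]).
Qed.

Lemma inR_iff C s : inBox (s, C) -> inR f A (s, C) <-> Sstar C < s.
Proof.
  intros hb. pose proof hb as [hs hC]; simpl in hs, hC.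
  destruct (hT C hC) as [ha _].
  destruct (lam_gap_cases C s hC hs) as [[? hg]|[[? hg]|[? hg]]];
    unfold inR, lam_gap in *;
    (split; [intros [_ ?]; lra | intros ?; split; [exact hb | lra]]).
Qed.

Lemma lamC_at_le_iff_le_Sk C x s : 0 <= C <= 1 -> 0 < x < Sstar C -> x <= s <= 1 ->
  lamC_at f A C x <= lamC_at f A C s <-> Rbar_le s (Sk f A Sstar (x, C)).
Proof.
  intros hC hx hs. destruct (hT C hC) as [ha _].
  unfold Sk; simpl.
  destruct (excluded_middle_informative (x = Sstar C)) as [e|_]; [lra|].
  destruct (excluded_middle_informative _) as [hex|hnex].
  - destruct (constructive_indefinite_description _ hex) as [S' [hS' [hne heq]]].
    change (lamC_at f A C S' = lamC_at f A C x) in heq. simpl.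
    assert (hS'a : Sstar C < S').
    { destruct (Rle_or_lt S' (Sstar C)) as [l|l]; [exfalso|exact l].
      destruct (Rtotal_order S' x) as [l1|[e|g1]]; [| congruence |].
      - assert (lamC_at f A C S' < lamC_at f A C x) by (apply lamC_at_increasing; lra).
        lra.
      - assert (lamC_at f A C x < lamC_at f A C S') by (apply lamC_at_increasing; lra).
        lra. }
    split.
    + intros h. destruct (Rle_or_lt s S') as [l|l]; [exact l|].
      assert (lamC_at f A C s < lamC_at f A C S') by (apply lamC_at_decreasing; lra).
      lra.
    + intros h. destruct (Rle_or_lt s (Sstar C)) as [l|l].
      * apply lamC_at_nondecreasing; lra.
      * rewrite <- heq. apply lamC_at_nonincreasing; lra.
  - split; [intros _; exact I | intros _].
    destruct (Rle_or_lt s (Sstar C)) as [l|l]; [apply lamC_at_nondecreasing; lra|].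
    destruct (Rle_or_lt (lamC_at f A C x) (lamC_at f A C s)) as [h|h]; [exact h|].
    exfalso.
    assert (hxa : lamC_at f A C x < lamC_at f A C (Sstar C))
      by (apply lamC_at_increasing; lra).
    destruct (Ranalysis5.IVT_interv (fun t => lamC_at f A C x - lamC_at f A C t)
                (Sstar C) s) as [z [hz ez]]; try lra.
    { intros t ht. apply continuity_pt_minus.
      - apply continuity_pt_const. intros u v. reflexivity.
      - apply continuity_lamC_at. lra. }
    apply hnex. exists z. repeat split; try lra.
    change (lamC_at f A C z = lamC_at f A C x). lra.
Qed.

Lemma Sstar_le_of_lamC_falls_through C xL x1 :
  0 <= C <= 1 -> 0 <= xL -> 0 <= x1 <= 1 -> xL <> x1 ->
  lamC_falls_through f A C xL x1 x1 -> Sstar C <= x1.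
Proof.
  intros hC hL h1 hne h. destruct (Rle_or_lt (Sstar C) x1) as [l|l]; [exact l|exfalso].
  destruct (Rlt_or_le xL x1) as [l1|l1].
  - specialize (h xL ltac:(apply between_iff; lra)).
    assert (lamC_at f A C xL < lamC_at f A C x1) by (apply lamC_at_increasing; lra).
    nra.
  - set (s := Rmin xL (Sstar C)).
    assert (hs1 : x1 < s) by (apply Rmin_glb_lt; lra).
    assert (hsL : s <= xL) by apply Rmin_l.
    assert (hsa : s <= Sstar C) by apply Rmin_r.
    specialize (h s ltac:(apply between_iff; lra)).
    assert (lamC_at f A C x1 < lamC_at f A C s) by (apply lamC_at_increasing; lra).
    nra.
Qed.

Lemma lamC_falls_through_Sstar_iff C xL :
  0 <= C <= 1 -> 0 <= xL <= 1 -> xL <> Sstar C ->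
  lamC_falls_through f A C xL (Sstar C) (Sstar C) <-> Sstar C < xL.
Proof.
  intros hC hL hne. split.
  - intros h. destruct (Rlt_or_le (Sstar C) xL) as [l|l]; [exact l|exfalso].
    specialize (h xL ltac:(apply between_iff; lra)).
    assert (lamC_at f A C xL < lamC_at f A C (Sstar C))
      by (apply lamC_at_increasing; lra).
    nra.
  - intros l s hs. apply between_iff in hs.
    assert (lamC_at f A C s <= lamC_at f A C (Sstar C))
      by (apply lamC_at_nonincreasing; lra).
    nra.
Qed.

Lemma le_Sstar_of_lamC_rises_through C x2 xR :
  0 <= C <= 1 -> 0 <= x2 <= 1 -> 0 <= xR <= 1 -> x2 <> xR ->
  lamC_rises_through f A C x2 xR x2 -> x2 <= Sstar C.
Proof.
  intros hC h2 hR hne h. destruct (Rle_or_lt x2 (Sstar C)) as [l|l]; [exact l|exfalso].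
  destruct (Rlt_or_le x2 xR) as [l1|l1].
  - specialize (h xR ltac:(apply between_iff; lra)).
    assert (lamC_at f A C xR < lamC_at f A C x2) by (apply lamC_at_decreasing; lra).
    nra.
  - set (s := Rmax xR (Sstar C)).
    assert (hs2 : s < x2) by (apply Rmax_lub_lt; lra).
    assert (hsR : xR <= s) by apply Rmax_l.
    assert (hsa : Sstar C <= s) by apply Rmax_r.
    specialize (h s ltac:(apply between_iff; lra)).
    assert (lamC_at f A C x2 < lamC_at f A C s) by (apply lamC_at_decreasing; lra).
    nra.
Qed.

Lemma lamC_rises_through_iff_le_Sk C x2 xR :
  0 <= C <= 1 -> 0 < x2 < Sstar C -> 0 <= xR <= 1 ->
  lamC_rises_through f A C x2 xR x2 <-> Rbar_le xR (Sk f A Sstar (x2, C)).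
Proof.
  intros hC h2 hR. destruct (hT C hC) as [ha _].
  assert (hSk : Rbar_le x2 (Sk f A Sstar (x2, C))) by (apply lamC_at_le_iff_le_Sk; lra).
  split.
  - intros h. destruct (Rlt_or_le xR x2) as [l|l].
    + apply (Rbar_le_trans _ x2); [simpl; lra | exact hSk].
    + apply lamC_at_le_iff_le_Sk; try lra.
      destruct (Req_dec xR x2) as [->|ne]; [lra|].
      specialize (h xR ltac:(apply between_iff; lra)). nra.
  - intros h s hs. apply between_iff in hs.
    destruct (Rlt_or_le s x2) as [l|l].
    + assert (lamC_at f A C s < lamC_at f A C x2) by (apply lamC_at_increasing; lra).
      nra.
    + assert (lamC_at f A C x2 <= lamC_at f A C s); [|nra].
      destruct (Req_dec s x2) as [->|ne]; [lra|].
      apply lamC_at_le_iff_le_Sk; try lra.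
      apply (Rbar_le_trans _ xR); [simpl; lra | exact h].
Qed.

Lemma SCS_conditions_necessary cL cR xL x1 x2 xR :
  0 <= cL -> cL < cR -> cR <= 1 ->
  0 <= xL <= 1 -> 0 <= x1 <= 1 -> 0 <= x2 <= 1 -> 0 <= xR <= 1 ->
  xL <> x1 -> x2 <> xR -> admissible f A (CWave (x1, cL) (x2, cR)) ->
  lamC_falls_through f A cL xL x1 x1 ->
  lamC_rises_through f A cR x2 xR x2 ->
  Sstar cL < xL /\ x1 = Sstar cL /\ 0 < x2 < Sstar cR /\
  Rbar_le xR (Sk f A Sstar (x2, cR)).
Proof.
  intros h0 hC h1 hxL hx1 hx2 hxR hL1 h2R [hs hadm] hleft hright.
  change (lamC_at f A cL x1 = lamC_at f A cR x2) in hs.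
  assert (hcL : 0 <= cL <= 1) by lra. assert (hcR : 0 <= cR <= 1) by lra.
  destruct (hT cL hcL) as [ha _].
  assert (ha1 := Sstar_le_of_lamC_falls_through cL xL x1 hcL ltac:(lra) hx1 hL1 hleft).
  assert (hb2 := le_Sstar_of_lamC_rises_through cR x2 xR hcR hx2 hxR h2R hright).
  assert (h2 : 0 < x2 < Sstar cR).
  { assert (0 < lamC_at f A cL x1) by (apply lamC_at_pos; lra).
    assert (lamC_at f A cL x1 <= lamC_at f A cL (Sstar cL))
      by (apply lamC_at_le_Sstar; lra).
    assert (lamC_at f A cL (Sstar cL) < lamC_at f A cR (Sstar cR))
      by (apply lamC_at_Sstar_increasing; lra).
    split.
    - destruct (Req_dec x2 0) as [e|]; [|lra].
      rewrite e, (lamC_at_0 cR hcR) in hs. lra.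
    - destruct (Req_dec x2 (Sstar cR)) as [e|]; [|lra]. rewrite e in hs. lra. }
  rewrite !inL_iff, !inT_iff, !inR_iff in hadm by (split; simpl; lra).
  assert (h1' : x1 = Sstar cL) by (destruct hadm as [[[h|h] _]|[_ [h|h]]]; lra).
  subst x1.
  rewrite lamC_falls_through_Sstar_iff in hleft by lra.
  rewrite lamC_rises_through_iff_le_Sk in hright by lra.
  tauto.
Qed.

Lemma SCS_conditions_sufficient cL cR xL x1 x2 xR :
  0 <= cL <= 1 -> 0 <= cR <= 1 -> 0 <= xL <= 1 -> 0 <= xR <= 1 ->
  lamC_at f A cL x1 = lamC_at f A cR x2 ->
  Sstar cL < xL -> x1 = 0 \/ x1 = Sstar cL -> 0 < x2 < Sstar cR ->
  Rbar_le xR (Sk f A Sstar (x2, cR)) ->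
  lamC_falls_through f A cL xL x1 x1 /\ lamC_rises_through f A cR x2 xR x2.
Proof.
  intros hcL hcR hxL hxR hs hRL hT1 hL2 hSk.
  destruct (hT cL hcL) as [ha _], (hT cR hcR) as [hb _].
  assert (h1 : x1 = Sstar cL).
  { destruct hT1 as [e|e]; [|exact e].
    rewrite e, (lamC_at_0 cL hcL) in hs.
    assert (0 < lamC_at f A cR x2) by (apply lamC_at_pos; lra). lra. }
  subst x1.
  rewrite lamC_falls_through_Sstar_iff, lamC_rises_through_iff_le_Sk by lra.
  tauto.
Qed.

End Flux.

Lemma compatible_SCS_iff f A cL cR xL x1 x2 xR :
  0 < A -> 0 <= xL -> 0 <= x1 -> 0 <= x2 -> 0 <= xR ->
  lamC_at f A cL x1 = lamC_at f A cR x2 ->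
  compatible f A (SWave (xL, cL) (x1, cL) :: CWave (x1, cL) (x2, cR) ::
                  SWave (x2, cR) (xR, cR) :: nil) <->
  lamC_falls_through f A cL xL x1 x1 /\ lamC_rises_through f A cR x2 xR x2.
Proof.
  intros hA hxL hx1 hx2 hxR hs.
  cbv beta iota delta [compatible v_final v_init fst snd].
  fold (lamC_at f A cL x1). rewrite hs at 2.
  rewrite vf_S_le_lamC_iff, lamC_le_vi_S_iff by assumption. tauto.
Qed.

Theorem lemma3p3 (f : R -> R -> R) (A : R) (Sstar : R -> R)
  (hA : 0 < A) (hf : flux_hyp f) (hT : transition_fun f A Sstar)
  (UL U1 U2 UR : state)
  (hUL : inBox UL) (hU1 : inBox U1) (hU2 : inBox U2) (hUR : inBox UR)
  (hC : snd UL < snd UR) (hne : UL <> UR)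
  (hw1 : admissible f A (SWave UL U1))
  (hw2 : admissible f A (CWave U1 U2))
  (hw3 : admissible f A (SWave U2 UR)) :
  compatible f A (SWave UL U1 :: CWave U1 U2 :: SWave U2 UR :: nil) <->
  (inR f A UL /\ inT f A U1 /\ inL f A U2 /\
   0 <= fst UR /\ Rbar_le (Finite (fst UR)) (Sk f A Sstar U2)).
Proof.
  destruct UL as [xL cL], U1 as [x1 c1], U2 as [x2 c2], UR as [xR cR].
  destruct hw1 as [e1 hL1], hw3 as [e3 h2R]. simpl in e1, e3, hL1, h2R, hC. subst c1 c2.
  pose proof hUL as [hxL hcL]; pose proof hU1 as [hx1 _];
    pose proof hU2 as [hx2 hcR]; pose proof hUR as [hxR _];
    simpl in hxL, hcL, hx1, hx2, hcR, hxR.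
  rewrite (compatible_SCS_iff f A cL cR xL x1 x2 xR hA ltac:(lra) ltac:(lra) ltac:(lra)
            ltac:(lra) (proj1 hw2)).
  rewrite (inR_iff f A Sstar hA hf hT), (inT_iff f A Sstar hA hf hT),
    (inL_iff f A Sstar hA hf hT) by assumption.
  split.
  - intros [hleft hright].
    destruct (SCS_conditions_necessary f A Sstar hA hf hT cL cR xL x1 x2 xR ltac:(lra) hC
                ltac:(lra) hxL hx1 hx2 hxR hL1 h2R hw2 hleft hright) as (? & ? & ? & ?).
    intuition lra.
  - intros (hRL & hT1 & hL2 & _ & hSk).
    exact (SCS_conditions_sufficient f A Sstar hA hf hT cL cR xL x1 x2 xR hcL hcR hxL hxR
             (proj1 hw2) hRL hT1 hL2 hSk).
Qed.
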